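(* Let $(\lambda_n)_{n\ge 1}$ be a sequence of positive real numbers and put $\Lambda_n=\sum_{i=1}^n\lambda_i$. Suppose that \[ M=\sup_{n\ge 1}\sum_{k=1}^{n}\frac{\lambda_k}{\Lambda_n}\Big(\frac{\Lambda_{k+1}}{\lambda_{k+1}}-\frac{\Lambda_k}{\lambda_k}\Big)<+\infty . \] Then for every sequence $(a_n)_{n\ge1}$ of non-negative real numbers with $\sum_{n=1}^\infty a_n<\infty$, \[ \sum_{n=1}^{\infty}\prod_{k=1}^{n}a_k^{\lambda_k/\Lambda_n}\le e^{M}\sum_{n=1}^{\infty}a_n . \] *)

From HB Require Import structures.
From mathcomp Require Import all_boot all_order all_algebra.
From mathcomp Require Import all_classical all_reals all_analysis.
Set Implicit Arguments. Unset Strict Implicit. Unset Printing Implicit Defensive.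
Import Order.TTheory GRing.Theory Num.Theory.
Local Open Scope ring_scope.

(* Sequences are indexed by nat; only indices n >= 1 are used. *)

Definition Lam (R : realType) (lam : nat -> R) (n : nat) : R :=
  \sum_(1 <= i < n.+1) lam i.

Definition Sn (R : realType) (lam : nat -> R) (n : nat) : R :=
  \sum_(1 <= k < n.+1)
     (lam k / Lam lam n) * (Lam lam k.+1 / lam k.+1 - Lam lam k / lam k).

(* prod_{k=1}^n a_k^{lambda_k / Lambda_n}, with powR (0 `^ x = 0 for x <> 0) *)
Definition geomterm (R : realType) (lam a : nat -> R) (n : nat) : R :=
  \prod_(1 <= k < n.+1) (a k `^ (lam k / Lam lam n)).

From HB Require Import structures.
From mathcomp Require Import all_boot all_order all_algebra.
From mathcomp Require Import all_classical all_reals all_analysis.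
From mathcomp Require Import ring lra.
Import Order.TTheory GRing.Theory Num.Theory.
Local Open Scope classical_set_scope.
Local Open Scope ring_scope.

(* With [r k = Lam k / lam k] and the weights [lam k / Lam n], which sum to 1,
   the n-th term is [prod (a_k r_k)^(lam k/Lam n) / prod r_k^(lam k/Lam n)].
   Weighted AM-GM bounds the numerator by [sum_(k<=n) Lam k a_k / Lam n], and
   telescoping [y (ln x - ln y) <= x - y] along [r 1, ..., r n.+1] shows that
   [S_n <= M] bounds the denominator below by [r n.+1 / e^M].  Hence the n-th
   term is at most [e^M lam n.+1 / (Lam n Lam n.+1) * sum_(k<=n) Lam k a_k], and
   summation by parts turns the sum of these bounds into [e^M sum a_k]. *)

Section WeightedAMGM.
Variable R : realType.

Lemma mul_lnB_le (x y : R) : 0 < x -> 0 < y -> y * (ln x - ln y) <= x - y.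
Proof.
move=> x0 y0.
have lnxy : ln x - ln y = ln (1 + (x / y - 1)) by rewrite addrCA subrr addr0 ln_div.
have : ln (1 + (x / y - 1)) <= x / y - 1 by apply: le_ln1Dx; rewrite ltrBrDl addrN divr_gt0.
rewrite -lnxy => /(ler_wpM2l (ltW y0)) /le_trans; apply.
by rewrite mulrBr mulr1 mulrCA divff ?mulr1 ?gt_eqF.
Qed.

(* Raise the tangent bound [x / A <= expR (x / A - 1)] to the power [w]. *)
Lemma powR_le_expR_tangent (A x w : R) : 0 < A -> 0 <= x -> 0 <= w ->
  x `^ w <= expR (w * ln A + (x / A - 1) * w).
Proof.
move=> A0 x0 w0.
have -> : w * ln A + (x / A - 1) * w = (ln A + (x / A - 1)) * w by ring.
rewrite expRM; apply: ge0_ler_powR; rewrite ?nnegrE ?expR_ge0 //.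
rewrite expRD lnK ?posrE //.
have := expR_ge1Dx (x / A - 1); rewrite addrC subrK -(ler_pM2l A0).
by rewrite mulrCA divff ?gt_eqF // mulr1.
Qed.

Lemma prod_powR_le_sum (I : eqType) (r : seq I) (P : pred I) (x w : I -> R) :
  (forall i, P i -> 0 <= x i) -> (forall i, P i -> 0 <= w i) ->
  \sum_(i <- r | P i) w i = 1 ->
  \prod_(i <- r | P i) x i `^ w i <= \sum_(i <- r | P i) w i * x i.
Proof.
move=> x0 w0 w1; set A := \sum_(i <- r | P i) w i * x i.
have wx0 i : P i -> 0 <= w i * x i by move=> Pi; rewrite mulr_ge0 ?x0 ?w0.
have [A0|A0] : A = 0 \/ 0 < A.
  by have := sumr_ge0 r wx0; rewrite le_eqVlt => /orP[/eqP|]; [left|right].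
  have /hasP[i ri /andP[Pi wi0]] : has (fun i => P i && (0 < w i)) r.
    by rewrite -psumr_neq0 // w1 oner_neq0.
  have /allP/(_ i ri) : all (fun i => P i ==> (w i * x i == 0)) r.
    by rewrite -psumr_eq0 // -/A A0.
  rewrite Pi mulf_eq0 gt_eqF //= => /eqP xi0.
  have /eqP -> : \prod_(i <- r | P i) x i `^ w i == 0.
    by rewrite prodf_seq_eq0; apply/hasP; exists i => //; rewrite Pi powR_eq0 xi0 eqxx gt_eqF.
  by rewrite A0.
apply: (@le_trans _ _ (\prod_(i <- r | P i) expR (w i * ln A + (x i / A - 1) * w i))).
  by apply: ler_prod => i Pi; rewrite powR_ge0 powR_le_expR_tangent ?x0 ?w0.
rewrite -expR_sum (eq_bigr (fun i => (ln A - 1) * w i + (w i * x i) / A)); last first.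
  by move=> i _; ring.
by rewrite big_split /= -mulr_sumr -mulr_suml w1 -/A divff ?gt_eqF // mulr1 subrK lnK.
Qed.

End WeightedAMGM.

Section CarlemanBound.
Variables (R : realType) (lam : nat -> R).
Hypothesis lam_gt0 : forall n, (1 <= n)%N -> 0 < lam n.
Local Notation L := (Lam lam).

Definition Lam_ratio k := L k / lam k.
Local Notation r := Lam_ratio.

Lemma Lam0 : L 0 = 0.
Proof. by rewrite /Lam big_geq. Qed.

Lemma LamS n : L n.+1 = L n + lam n.+1.
Proof. by rewrite /Lam big_nat_recr. Qed.

Lemma Lam_ge0 n : 0 <= L n.
Proof.
rewrite /Lam big_nat_cond; apply: sumr_ge0 => i /andP[/andP[i1 _] _].
exact/ltW/lam_gt0.
Qed.

Lemma Lam_gt0 {n} : (1 <= n)%N -> 0 < L n.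
Proof.
case: n => // n _; rewrite LamS.
by rewrite ltr_pwDr ?Lam_ge0 ?lam_gt0.
Qed.

Lemma Lam_ratio_gt0 {k} : (1 <= k)%N -> 0 < r k.
Proof. by move=> k1; rewrite divr_gt0 ?Lam_gt0 ?lam_gt0. Qed.

Lemma sum_lam_div_Lam n : (1 <= n)%N -> \sum_(1 <= k < n.+1) lam k / L n = 1.
Proof. by move=> n1; rewrite -mulr_suml divff // gt_eqF ?Lam_gt0. Qed.

Lemma Sn_E n : Sn lam n = (\sum_(1 <= k < n.+1) lam k * (r k.+1 - r k)) / L n.
Proof. by rewrite /Sn mulr_suml; apply: eq_bigr => k _; rewrite /r; ring. Qed.

(* Each step [n -> n.+1] is [mul_lnB_le] at [x = r n.+2], [y = r n.+1],
   multiplied by [lam n.+1], because [L n.+1 = lam n.+1 * r n.+1]. *)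
Lemma Lam_ln_ratio_le n :
  L n * ln (r n.+1) - \sum_(1 <= k < n.+1) lam k * ln (r k)
  <= \sum_(1 <= k < n.+1) lam k * (r k.+1 - r k).
Proof.
elim: n => [|n IH]; first by rewrite Lam0 !big_geq // mul0r subrr.
have lamn1 := lam_gt0 _ (ltn0Sn n).
have step : L n.+1 * (ln (r n.+2) - ln (r n.+1)) <= lam n.+1 * (r n.+2 - r n.+1).
  have -> : L n.+1 = lam n.+1 * r n.+1 by rewrite /r mulrCA divff ?mulr1 ?gt_eqF.
  rewrite -mulrA ler_wpM2l ?(ltW lamn1) //.
  exact: mul_lnB_le (Lam_ratio_gt0 (ltn0Sn _)) (Lam_ratio_gt0 (ltn0Sn _)).
move: step; rewrite (LamS n) !(big_nat_recr n.+1 1) //=; lra.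
Qed.

Lemma ln_Lam_ratio_sub_le n M : (1 <= n)%N -> Sn lam n <= M ->
  ln (r n.+1) - M <= \sum_(1 <= k < n.+1) lam k / L n * ln (r k).
Proof.
move=> n1; have Ln := Lam_gt0 n1.
rewrite Sn_E -(ler_pM2r Ln) divfK ?gt_eqF // => SM.
rewrite -(ler_pM2r Ln) mulr_suml.
under eq_bigr => k _ do rewrite mulrAC divfK ?gt_eqF //.
by move: (Lam_ln_ratio_le n) SM; rewrite mulrBl (mulrC (ln _)); lra.
Qed.

Lemma Lam_ratio_le_geomean n M : (1 <= n)%N -> Sn lam n <= M ->
  r n.+1 / expR M <= \prod_(1 <= k < n.+1) r k `^ (lam k / L n).
Proof.
move=> n1 SM.
have -> : \prod_(1 <= k < n.+1) r k `^ (lam k / L n)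
    = expR (\sum_(1 <= k < n.+1) lam k / L n * ln (r k)).
  rewrite expR_sum big_nat_cond [RHS]big_nat_cond.
  by apply: eq_bigr => k /andP[/andP[k1 _] _]; rewrite /powR gt_eqF ?Lam_ratio_gt0.
rewrite -[r n.+1]lnK ?posrE ?Lam_ratio_gt0 // -expRN -expRD ler_expR.
exact: ln_Lam_ratio_sub_le.
Qed.

Lemma geomterm_mul_geomean_le (a : nat -> R) n :
  (1 <= n)%N -> (forall k, (1 <= k)%N -> 0 <= a k) ->
  geomterm lam a n * \prod_(1 <= k < n.+1) r k `^ (lam k / L n)
  <= (\sum_(1 <= k < n.+1) L k * a k) / L n.
Proof.
move=> n1 a0; have Ln := Lam_gt0 n1.
rewrite /geomterm -big_split /= mulr_suml.
rewrite big_nat_cond [X in _ <= X]big_nat_cond.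
under eq_bigr => k /andP[/andP[k1 _] _] do
  rewrite -powRM ?a0 ?(ltW (Lam_ratio_gt0 k1)) //.
have -> : \sum_(1 <= k < n.+1 | (1 <= k < n.+1)%N && true) L k * a k / L n
        = \sum_(1 <= k < n.+1 | (1 <= k < n.+1)%N && true) lam k / L n * (a k * r k).
  apply: eq_bigr => k /andP[/andP[k1 _] _]; rewrite /r.
  by field; rewrite !gt_eqF ?lam_gt0.
apply: prod_powR_le_sum => [k /andP[/andP[k1 _] _]|k /andP[/andP[k1 _] _]|].
- by rewrite mulr_ge0 ?a0 ?ltW ?Lam_ratio_gt0.
- by rewrite divr_ge0 ?ltW ?lam_gt0.
- by rewrite -big_nat_cond sum_lam_div_Lam.
Qed.

Lemma geomterm_le (a : nat -> R) n M : (1 <= n)%N -> Sn lam n <= M ->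
  (forall k, (1 <= k)%N -> 0 <= a k) ->
  geomterm lam a n
  <= expR M * (lam n.+1 / (L n * L n.+1)) * \sum_(1 <= k < n.+1) L k * a k.
Proof.
move=> n1 SM a0; have Ln := Lam_gt0 n1; have lamn1 := lam_gt0 _ (ltn0Sn n).
set G := \prod_(1 <= k < n.+1) r k `^ (lam k / L n).
have rG : r n.+1 / expR M <= G by exact: Lam_ratio_le_geomean.
have G0 : 0 < G by apply: lt_le_trans rG; rewrite divr_gt0 ?expR_gt0 ?Lam_ratio_gt0.
have := geomterm_mul_geomean_le a n n1 a0; rewrite -/G -ler_pdivlMr // => /le_trans.
apply; set B := \sum_(_ <= _ < _) _.
have B0 : 0 <= B.
  rewrite /B big_nat_cond; apply: sumr_ge0 => k /andP[/andP[k1 _] _].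
  by rewrite mulr_ge0 ?a0 ?Lam_ge0.
rewrite [leRHS](_ : _ = B / L n / (r n.+1 / expR M)); last first.
  by rewrite /r; field; rewrite !gt_eqF ?expR_gt0 ?Lam_gt0.
rewrite ler_wpM2l ?divr_ge0 ?(ltW Ln) // lef_pV2 ?posrE //.
by rewrite divr_gt0 ?expR_gt0 ?Lam_ratio_gt0.
Qed.

(* Summation by parts, with [lam n.+1 / (L n * L n.+1) = 1 / L n - 1 / L n.+1]. *)
Lemma sum_Lam_partial_sums (a : nat -> R) N :
  \sum_(1 <= n < N.+1) lam n.+1 / (L n * L n.+1) * \sum_(1 <= k < n.+1) L k * a k
  + (\sum_(1 <= k < N.+1) L k * a k) / L N.+1 = \sum_(1 <= k < N.+1) a k.
Proof.
elim: N => [|N IH]; first by rewrite !big_geq // mul0r addr0.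
rewrite !(big_nat_recr N.+1 1) //= -IH.
have LN := Lam_gt0 (ltn0Sn N); have lamN := lam_gt0 _ (ltn0Sn N.+1).
by rewrite (LamS N.+1); field; rewrite !gt_eqF // ltr_wpDl // ltW.
Qed.

Lemma sum_geomterm_le (a : nat -> R) M N :
  (forall n, (1 <= n)%N -> Sn lam n <= M) -> (forall k, (1 <= k)%N -> 0 <= a k) ->
  \sum_(1 <= n < N.+1) geomterm lam a n <= expR M * \sum_(1 <= k < N.+1) a k.
Proof.
move=> SM a0.
apply: (@le_trans _ _ (\sum_(1 <= n < N.+1) expR M *
   (lam n.+1 / (L n * L n.+1) * \sum_(1 <= k < n.+1) L k * a k))).
  rewrite big_nat_cond [X in _ <= X]big_nat_cond.
  apply: ler_sum => n /andP[/andP[n1 _] _].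
  by rewrite mulrA geomterm_le ?SM.
rewrite -mulr_sumr ler_wpM2l ?expR_ge0 // -sum_Lam_partial_sums lerDl.
rewrite divr_ge0 ?Lam_ge0 // big_nat_cond; apply: sumr_ge0 => k /andP[/andP[k1 _] _].
by rewrite mulr_ge0 ?a0 ?Lam_ge0.
Qed.

End CarlemanBound.

Theorem corollary2p1 (R : realType) (lam : nat -> R) (M : R)
  (lam_pos : forall n, (1 <= n)%N -> 0 < lam n)
  (S_bnd : has_ubound [set Sn lam n | n in [set n : nat | (1 <= n)%N]])
  (M_def : M = sup [set Sn lam n | n in [set n : nat | (1 <= n)%N]])
  (a : nat -> R)
  (a_nneg : forall n, (1 <= n)%N -> 0 <= a n)
  (a_sum : (\sum_(1 <= n <oo) (a n)%:E < +oo)%E) :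
  (\sum_(1 <= n <oo) (geomterm lam a n)%:E
     <= (expR M)%:E * \sum_(1 <= n <oo) (a n)%:E)%E.
Proof.
have SM n : (1 <= n)%N -> Sn lam n <= M.
  by move=> n1; rewrite M_def; apply: (ub_le_sup S_bnd); exists n.
have geomterm_ge0 n : (1 <= n)%N -> xpredT n -> (0 <= (geomterm lam a n)%:E)%E.
  by move=> _ _; rewrite lee_fin; apply: prodr_ge0 => k _; apply: powR_ge0.
move/ereal_nondecreasing_series/ereal_nondecreasing_cvgn/cvg_lim : geomterm_ge0 => -> //.
apply: ub_ereal_sup => _ [N _ <-] /=.
rewrite sumEFin; apply: (@le_trans _ _ ((expR M * \sum_(1 <= n < N) a n)%:E)).
  rewrite lee_fin; case: N => [|N]; first by rewrite !big_geq // mulr0.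
  exact: sum_geomterm_le.
rewrite EFinM -sumEFin lee_wpmul2l ?lee_fin ?expR_ge0 //.
by apply: (nneseries_lim_ge (P := xpredT)) => n n1 _; rewrite lee_fin a_nneg.
Qed.
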